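(* Let $H$ be a separable complex Hilbert space, $(\Omega,\mu)$ a measure space with positive measure, let $K\in B(H)$ have closed range, let $F:\Omega\to H$ be a Parseval continuous $K$-frame of $H$, and let $\tilde F(\omega)=K^{\dagger}F(\omega)$ be its canonical dual continuous $K$-Bessel sequence. Let $f\in H$. Then for any $c\in L^2(\Omega,\mu)$ satisfying $Kf=\int_\Omega c(\omega)F(\omega)\,d\mu(\omega)$, we have $$\int_\Omega|c(\omega)|^2\,d\mu(\omega)=\int_\Omega|c(\omega)-\langle f,\tilde F(\omega)\rangle|^2\,d\mu(\omega)+\int_\Omega|\langle f,\tilde F(\omega)\rangle|^2\,d\mu(\omega).$$
   Context: A map $F:\Omega\to H$ is weakly measurable if $\omega\mapsto\langle f,F(\omega)\rangle$ is measurable for every $f\in H$. A Parseval continuous $K$-frame is a weakly measurable $F$ with $\int_\Omega|\langle f,F(\omega)\rangle|^2\,d\mu(\omega)=\|K^{\ast}f\|^2$ for all $f\in H$. Integrals $\int_\Omega c(\omega)F(\omega)\,d\mu(\omega)$ are understood weakly. $K^{\dagger}$ is the Moore–Penrose pseudo-inverse of the closed-range operator $K$; the canonical dual continuous $K$-Bessel sequence of $F$ is $K^{\dagger}F$, which satisfies $Kg=\int_\Omega\langle g,K^\dagger F(\omega)\rangle F(\omega)\,d\mu(\omega)$ for all $g\in H$. *)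

From HB Require Import structures.
From mathcomp Require Import all_boot all_order all_algebra.
From mathcomp Require Import all_classical all_reals all_analysis.
From mathcomp Require Import complex.
Set Implicit Arguments. Unset Strict Implicit. Unset Printing Implicit Defensive.
Import Order.TTheory GRing.Theory Num.Theory.
Local Open Scope ring_scope.
Local Open Scope classical_set_scope.

Section HilbertDefs.
Variable R : realType.
Local Notation C := R[i].
Variable H : lmodType C.
Variable ip : H -> H -> C. (* inner product, linear in the first argument *)

Definition hnorm (x : H) : R := Num.sqrt (complex.Re (ip x x)).

Definition cauchy_seq (u : nat -> H) : Prop :=
  forall e : R, 0 < e -> exists N : nat, forall m n : nat,
    (N <= m)%N -> (N <= n)%N -> hnorm (u m - u n) < e.

Definition converges_to (u : nat -> H) (l : H) : Prop :=
  forall e : R, 0 < e -> exists N : nat, forall n : nat,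
    (N <= n)%N -> hnorm (u n - l) < e.

Record hilbert_space : Prop := HilbertSpace {
  ip_linear : forall (a : C) (x y z : H), ip (a *: x + y) z = a * ip x z + ip y z;
  ip_conj_sym : forall x y : H, ip y x = conjc (ip x y);
  ip_nonneg : forall x : H, 0 <= complex.Re (ip x x);
  ip_definite : forall x : H, ip x x = 0 -> x = 0;
  ip_complete : forall u : nat -> H, cauchy_seq u -> exists l, converges_to u l
}.

Definition separable : Prop :=
  exists s : nat -> H, forall (x : H) (e : R), 0 < e ->
    exists n : nat, hnorm (x - s n) < e.

Definition bounded_op (T : H -> H) : Prop :=
  (forall (a : C) (x y : H), T (a *: x + y) = a *: T x + T y) /\
  exists M : R, forall x : H, hnorm (T x) <= M * hnorm x.

Definition closed_range (T : H -> H) : Prop :=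
  forall (u : nat -> H) (y : H), converges_to (fun n => T (u n)) y ->
    exists x : H, y = T x.

Definition adjoint_of (T Ts : H -> H) : Prop :=
  forall x y : H, ip (T x) y = ip x (Ts y).

Definition self_adjoint (T : H -> H) : Prop :=
  forall x y : H, ip (T x) y = ip x (T y).

(* Td is the Moore--Penrose pseudo-inverse of T: the (unique) bounded operator
   satisfying the four Penrose equations *)
Definition mp_pinv (T Td : H -> H) : Prop :=
  [/\ bounded_op Td,
      (forall x, T (Td (T x)) = T x),
      (forall x, Td (T (Td x)) = Td x),
      self_adjoint (fun x => T (Td x)) &
      self_adjoint (fun x => Td (T x))].

End HilbertDefs.

Section MeasureDefs.
Variable R : realType.
Local Notation C := R[i].
Context d (T : measurableType d).
Variable mu : {measure set T -> \bar R}.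

Definition sqmod (z : C) : R := complex.Re z ^+ 2 + complex.Im z ^+ 2.

Definition cmeasurable (h : T -> C) : Prop :=
  measurable_fun setT (fun w => complex.Re (h w)) /\ measurable_fun setT (fun w => complex.Im (h w)).

Definition cintegrable (h : T -> C) : Prop :=
  mu.-integrable setT (fun w => (complex.Re (h w))%:E) /\
  mu.-integrable setT (fun w => (complex.Im (h w))%:E).

Definition cintegral (h : T -> C) : C :=
  Complex (Rintegral mu setT (fun w => complex.Re (h w)))
          (Rintegral mu setT (fun w => complex.Im (h w))).

Definition L2fun (c : T -> C) : Prop :=
  cmeasurable c /\ (\int[mu]_(w in setT) (sqmod (c w))%:E < +oo)%E.

Variable H : lmodType C.
Variable ip : H -> H -> C.

Definition weakly_measurable (F : T -> H) : Prop :=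
  forall f : H, cmeasurable (fun w => ip f (F w)).

(* Parseval continuous K-frame; Ks is the adjoint K^* of K *)
Definition parseval_cont_Kframe (Ks : H -> H) (F : T -> H) : Prop :=
  weakly_measurable F /\
  forall f : H, (\int[mu]_(w in setT) (sqmod (ip f (F w)))%:E)%E
                = ((hnorm ip (Ks f)) ^+ 2)%:E.

(* v = \int c(w) F(w) dmu(w) in the weak sense:
   <v, g> = \int c(w) <F(w), g> dmu(w) for all g (integrand integrable) *)
Definition weak_integral (c : T -> C) (F : T -> H) (v : H) : Prop :=
  forall g : H, cintegrable (fun w => c w * ip (F w) g) /\
                ip v g = cintegral (fun w => c w * ip (F w) g).

End MeasureDefs.

From HB Require Import structures.
From mathcomp Require Import all_boot all_order all_algebra.
From mathcomp Require Import all_classical all_reals all_analysis.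
From mathcomp Require Import complex measurable_realfun.
From mathcomp Require Import ring lra.
Set Implicit Arguments. Unset Strict Implicit. Unset Printing Implicit Defensive.
Import Order.TTheory GRing.Theory Num.Theory.
Local Open Scope ring_scope.
Local Open Scope classical_set_scope.
Local Open Scope complex_scope.

(* Since Kd is bounded, it has an adjoint Kd^* by the Riesz representation
   theorem, proved by minimising the norm of a bounded functional phi on the
   hyperplane [phi = 1]: a minimising sequence is Cauchy by the parallelogram
   law, and its limit is orthogonal to the kernel of phi.  With g := Kd^* f the
   coefficients are a(w) = <f, Kd F(w)> = <g, F(w)>.  Expanding
   |c - a|^2 = |c|^2 + |a|^2 - 2 Re (c conj a), the claim reduces to
   \int Re (c conj a) = \int |a|^2.  The left side is Re <K f, g> by the weak
   integral hypothesis, the right side is |Ks g|^2 by the Parseval property,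
   and Ks g = Kd K f, so both equal <Kd K f, f>. *)

Section ComplexFacts.
Variable R : realType.
Implicit Types (r : R) (x y w : R[i]).

Lemma complex_ReJ x : complex.Re (conjc x) = complex.Re x.
Proof. by case: x. Qed.

Lemma complex_ReR r x : complex.Re (r%:C * x) = r * complex.Re x.
Proof. by case: x => a b /=; rewrite mul0r subr0. Qed.

Lemma mulcJ x : x * (conjc x) = (sqmod x)%:C.
Proof. by case: x => a b; rewrite /sqmod /=; simpc; congr Complex; ring. Qed.

Lemma sqmodR r : sqmod r%:C = r ^+ 2.
Proof. by rewrite /sqmod /= expr0n addr0. Qed.

Lemma sqmodN x : sqmod (- x) = sqmod x.
Proof. by rewrite /sqmod raddfN [in X in _ + X]raddfN /= !sqrrN. Qed.

Lemma sqmod_ge0 x : 0 <= sqmod x.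
Proof. by rewrite /sqmod addr_ge0 ?sqr_ge0. Qed.

Lemma sqmod_eq0 x : sqmod x = 0 -> x = 0.
Proof.
case: x => a b; rewrite /sqmod /= => /eqP.
by rewrite paddr_eq0 ?sqr_ge0 // !sqrf_eq0 => /andP[/eqP-> /eqP->].
Qed.

Lemma sqmodB x y : sqmod (x - y) = sqmod x + sqmod y - 2 * complex.Re (x * (conjc y)).
Proof. by case: x => a b; case: y => c e; rewrite /sqmod /=; ring. Qed.

(* Evaluate the form at [s = - w / (A + 1)]. *)
Lemma quadratic_ge0_linear_eq0 (A : R) w : 0 <= A ->
  (forall s, 0 <= sqmod s * A + 2 * complex.Re (conjc s * w)) -> w = 0.
Proof.
move=> A0 hq; set tau := (A + 1)^-1.
have tau0 : 0 < tau by rewrite invr_gt0; lra.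
have tauA : tau * A < 1 by rewrite mulrC ltr_pdivrMr ?mul1r; lra.
apply: sqmod_eq0; apply/eqP; rewrite eq_le sqmod_ge0 andbT.
have : sqmod w * (tau * (2 - tau * A)) <= 0.
  move: (hq (- (tau%:C * w))); clear hq; case: w => a b; rewrite /sqmod /=.
  by rewrite !(mul0r, subr0, addr0, mulr0, oppr0); lra.
by rewrite pmulr_lle0 // mulr_gt0 // subr_gt0; lra.
Qed.

End ComplexFacts.

Section InnerProduct.
Variable R : realType.
Local Notation C := R[i].
Variable H : lmodType C.
Variable ip : H -> H -> C.
Hypothesis hH : hilbert_space ip.
Local Notation sqnorm x := (complex.Re (ip x x)).
Implicit Types (a : C) (x y z : H).

Lemma ipDl x y z : ip (x + y) z = ip x z + ip y z.
Proof. by have := ip_linear hH 1 x y z; rewrite scale1r mul1r. Qed.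

Lemma ip0l z : ip 0 z = 0.
Proof. by apply: (@addrI _ (ip 0 z)); rewrite -ipDl !addr0. Qed.

Lemma ipZl a x z : ip (a *: x) z = a * ip x z.
Proof. by rewrite -[a *: x]addr0 (ip_linear hH) ip0l addr0. Qed.

Lemma ipNl x z : ip (- x) z = - ip x z.
Proof. by rewrite -scaleN1r ipZl mulN1r. Qed.

Lemma ipBl x y z : ip (x - y) z = ip x z - ip y z.
Proof. by rewrite ipDl ipNl. Qed.

Lemma ipDr x y z : ip z (x + y) = ip z x + ip z y.
Proof. by rewrite (ip_conj_sym hH) ipDl rmorphD /= -!(ip_conj_sym hH). Qed.

Lemma ip0r z : ip z 0 = 0.
Proof. by rewrite (ip_conj_sym hH) ip0l conjc0. Qed.

Lemma ipZr a x z : ip z (a *: x) = conjc a * ip z x.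
Proof. by rewrite (ip_conj_sym hH) ipZl rmorphM /= -(ip_conj_sym hH). Qed.

Lemma ipNr x z : ip z (- x) = - ip z x.
Proof. by rewrite (ip_conj_sym hH) ipNl rmorphN /= -(ip_conj_sym hH). Qed.

Lemma ipBr x y z : ip z (x - y) = ip z x - ip z y.
Proof. by rewrite ipDr ipNr. Qed.

Lemma ipxx_real x : ip x x = (sqnorm x)%:C.
Proof.
move: (ip_conj_sym hH x x); case: (ip x x) => a b /= [hb].
by congr Complex; lra.
Qed.

Lemma sqnorm_ge0 x : 0 <= sqnorm x.
Proof. exact: ip_nonneg. Qed.

Lemma sqnorm_eq0 x : sqnorm x = 0 -> x = 0.
Proof. by move=> x0; apply: (ip_definite hH); rewrite ipxx_real x0. Qed.

Lemma sqnormD x y : sqnorm (x + y) = sqnorm x + sqnorm y + 2 * complex.Re (ip x y).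
Proof.
rewrite ipDl !ipDr [ip y x](ip_conj_sym hH) !raddfD /= complex_ReJ; lra.
Qed.

Lemma sqnormB x y : sqnorm (x - y) = sqnorm x + sqnorm y - 2 * complex.Re (ip x y).
Proof. by rewrite sqnormD ipNl ipNr opprK ipNr raddfN /= mulrN. Qed.

Lemma sqnormZ a x : sqnorm (a *: x) = sqmod a * sqnorm x.
Proof. by rewrite ipZl ipZr mulrA mulcJ ipxx_real complex_ReR. Qed.

Lemma parallelogram x y :
  sqnorm (x + y) + sqnorm (x - y) = 2 * sqnorm x + 2 * sqnorm y.
Proof. by rewrite sqnormD sqnormB; ring. Qed.

Lemma cauchy_schwarz x y : sqmod (ip x y) <= sqnorm x * sqnorm y.
Proof.
have [/sqnorm_eq0 ->|y0] := eqVneq (sqnorm y) 0.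
  by rewrite !ip0r mulr0 /sqmod /= expr0n addr0.
have {y0}y_gt0 : 0 < sqnorm y by rewrite lt0r y0 sqnorm_ge0.
set t := (sqnorm y)^-1%:C * ip x y.
have := sqnorm_ge0 (x - t *: y).
rewrite sqnormB sqnormZ ipZr /t; case: (ip x y) => a b; rewrite /sqmod /=.
set E := (X in 0 <= X -> _).
have -> : E = sqnorm x - (a ^+ 2 + b ^+ 2) / sqnorm y.
  by rewrite /E; field; rewrite gt_eqF.
by rewrite subr_ge0 ler_pdivrMr // mulrC.
Qed.

Lemma sqnormD_le x y t : 0 < t ->
  sqnorm (x + y) <= (1 + t) * sqnorm x + (1 + t^-1) * sqnorm y.
Proof.
move=> t_gt0; rewrite sqnormD.
suff : 2 * complex.Re (ip x y) <= t * sqnorm x + t^-1 * sqnorm y by lra.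
have := sqnorm_ge0 (t%:C *: x - y).
rewrite sqnormB sqnormZ ipZl complex_ReR sqmodR => h.
by rewrite -(ler_pM2l t_gt0) mulrDr mulVKf ?gt_eqF //; lra.
Qed.

Lemma ipr_inj y z : (forall x, ip x y = ip x z) -> y = z.
Proof.
move=> yz; apply/eqP; rewrite -subr_eq0; apply/eqP/sqnorm_eq0.
by rewrite ipBr yz subrr.
Qed.

Lemma converges_to_near u l : converges_to ip u l ->
  forall e, 0 < e -> \forall n \near \oo, sqnorm (u n - l) < e.
Proof.
move=> ul e e_gt0; have /ul[k kP] : 0 < Num.sqrt e by rewrite sqrtr_gt0.
by exists k => // n /= /kP; rewrite /hnorm ltr_sqrt.
Qed.

Lemma sqnormBC x y : sqnorm (x - y) = sqnorm (y - x).
Proof. by rewrite -opprB ipNl ipNr opprK. Qed.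

Lemma converges_to_sqnorm_le u l (b : R) : converges_to ip u l ->
  (forall e, 0 < e -> \forall n \near \oo, sqnorm (u n) < b + e) -> sqnorm l <= b.
Proof.
move=> ul ub.
have le_scaled t : 0 < t -> sqnorm l <= (1 + t) * b.
  move=> t_gt0; apply/ler_addgt0Pr => e e_gt0.
  set s := 1 + t; set s' := 1 + t^-1.
  have s_gt0 : 0 < s by rewrite /s; lra.
  have s'_gt0 : 0 < s' by rewrite /s' ltr_pwDl // invr_ge0 ltW.
  set de := e / (s + s').
  have de_gt0 : 0 < de by rewrite divr_gt0 // addr_gt0.
  have deE : s * de + s' * de = e by rewrite -mulrDl mulrC divfK // gt_eqF // addr_gt0.
  have [k1 _ k1P] := ub de de_gt0.
  have [k2 _ k2P] := converges_to_near ul de_gt0.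
  set n := maxn k1 k2.
  have h1 : s * sqnorm (u n) <= s * (b + de) by rewrite ler_pM2l // ltW // (k1P _ (leq_maxl _ _)).
  have h2 : s' * sqnorm (u n - l) <= s' * de by rewrite ler_pM2l // ltW // (k2P _ (leq_maxr _ _)).
  have := sqnormD_le (u n) (l - u n) t_gt0.
  rewrite addrC subrK -sqnormBC -/s -/s' => h; lra.
apply/ler_addgt0Pr => e e_gt0.
have b1_gt0 : 0 < `|b| + 1 by rewrite ltr_wpDl.
have t_gt0 : 0 < e / (`|b| + 1) by rewrite divr_gt0.
apply: (le_trans (le_scaled _ t_gt0)).
rewrite mulrDl mul1r lerD2l (le_trans (ler_wpM2l (ltW t_gt0) (ler_norm b))) //.
by rewrite mulrAC ler_pdivrMr // ler_pM2l // lerDl.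
Qed.

End InnerProduct.

Section RieszRepresentation.
Variable R : realType.
Local Notation C := R[i].
Variable H : lmodType C.
Variable ip : H -> H -> C.
Hypothesis hH : hilbert_space ip.
Local Notation sqnorm x := (complex.Re (ip x x)).
Implicit Types (a : C) (x y : H).

Variable phi : H -> C.
Hypothesis phi_linear : forall a x y, phi (a *: x + y) = a * phi x + phi y.
Variable M : R.
Hypothesis phi_bounded : forall x, sqmod (phi x) <= M * sqnorm x.

Let phiD x y : phi (x + y) = phi x + phi y.
Proof. by have := phi_linear 1 x y; rewrite scale1r mul1r. Qed.

Let phi0 : phi 0 = 0.
Proof. by apply: (@addrI _ (phi 0)); rewrite -phiD !addr0. Qed.

Let phiZ a x : phi (a *: x) = a * phi x.
Proof. by rewrite -[a *: x]addr0 phi_linear phi0 addr0. Qed.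

Let phiB x y : phi (x - y) = phi x - phi y.
Proof. by rewrite phiD -scaleN1r phiZ mulN1r. Qed.

Let phi_continuous u l : converges_to ip u l ->
  forall e, 0 < e -> \forall n \near \oo, sqmod (phi (u n) - phi l) < e.
Proof.
move=> ul e e_gt0; have M1_gt0 : 0 < `|M| + 1 by rewrite ltr_wpDl.
have [k _ kP] := converges_to_near ul (divr_gt0 e_gt0 M1_gt0).
exists k => // n /kP; rewrite -phiB ltr_pdivlMr // => small.
apply: le_lt_trans (phi_bounded _) _; apply: le_lt_trans small.
by rewrite mulrC ler_wpM2l ?sqnorm_ge0 // (le_trans (ler_norm M)) // lerDl.
Qed.

Hypothesis phi_neq0 : exists x, phi x != 0.

Let sqnorms := [set sqnorm x | x in [set x | phi x = 1]].

Let sqnorms_has_inf : has_inf sqnorms.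
Proof.
split; last by exists 0 => _ [y _ <-]; exact: sqnorm_ge0.
have [x x_neq0] := phi_neq0.
by exists (sqnorm ((phi x)^-1 *: x)), ((phi x)^-1 *: x); rewrite // /= phiZ mulVf.
Qed.

Let dist2 := inf sqnorms.

Let dist2_le x : phi x = 1 -> dist2 <= sqnorm x.
Proof. by move=> hx; apply: (ge_inf (proj2 sqnorms_has_inf)); exists x. Qed.

Let minimizing u := forall n, phi (u n) = 1 /\ sqnorm (u n) < dist2 + n.+1%:R^-1.

Let minimizing_exists : exists u, minimizing u.
Proof.
suff /choice[u uP] : forall n, exists x, phi x = 1 /\ sqnorm x < dist2 + n.+1%:R^-1.
  by exists u.
move=> n; have n_gt0 : 0 < n.+1%:R^-1 :> R by rewrite invr_gt0.
by have [_ [x hx <-] lt] := inf_adherent n_gt0 sqnorms_has_inf; exists x.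
Qed.

Let hyperplane_sqnormB x y : phi x = 1 -> phi y = 1 ->
  sqnorm (x - y) <= 2 * sqnorm x + 2 * sqnorm y - 4 * dist2.
Proof.
move=> hx hy; have hm : phi ((2^-1 : R)%:C *: (x + y)) = 1.
  rewrite phiZ phiD hx hy; apply/eqP; rewrite eq_complex /=.
  by rewrite !(mul0r, mulr0, addr0, subr0) eqxx andbT; apply/eqP; field.
have := dist2_le hm; rewrite sqnormZ // sqmodR.
by have := parallelogram hH x y; lra.
Qed.

Let minimizing_cauchy u : minimizing u -> cauchy_seq ip u.
Proof.
move=> uP e e_gt0; have e2_gt0 : 0 < e ^+ 2 / 4 by rewrite divr_gt0 ?exprn_gt0.
have [k _ kP] := near_infty_natSinv_lt (PosNum e2_gt0).
exists k => m n km kn.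
rewrite /hnorm -[e in _ < e]gtr0_norm // -sqrtr_sqr ltr_sqrt ?exprn_gt0 //.
have := hyperplane_sqnormB (uP m).1 (uP n).1.
have := (uP m).2; have := (uP n).2; have := kP _ km; have := kP _ kn; rewrite /=.
set a := n.+1%:R^-1; set b := m.+1%:R^-1; set q := e ^+ 2 / 4.
have -> : e ^+ 2 = 4 * q by rewrite /q; field.
lra.
Qed.

Let minimizing_limit u l : minimizing u -> converges_to ip u l ->
  phi l = 1 /\ sqnorm l <= dist2.
Proof.
move=> uP ul; split.
  apply/eqP; rewrite -subr_eq0; apply/eqP/sqmod_eq0/eqP.
  rewrite eq_le sqmod_ge0 andbT; apply/ler_addgt0Pr => e e_gt0; rewrite add0r.
  have [k _ kP] := phi_continuous ul e_gt0.
  by rewrite -sqmodN opprB -(uP k).1 ltW // kP /=.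
apply: (converges_to_sqnorm_le hH ul) => e e_gt0.
have [k _ kP] := near_infty_natSinv_lt (PosNum e_gt0).
exists k => // n /kP /= n_small; apply: lt_trans (uP n).2 _.
by rewrite ltrD2l.
Qed.

Let minimizer_orthogonal l : phi l = 1 -> sqnorm l <= dist2 ->
  forall y, phi y = 0 -> ip y l = 0.
Proof.
move=> hl l_min y hy; rewrite (ip_conj_sym hH).
suff -> : ip l y = 0 by rewrite conjc0.
apply: (quadratic_ge0_linear_eq0 (sqnorm_ge0 hH y)) => s.
have /dist2_le : phi (l + s *: y) = 1 by rewrite phiD phiZ hy mulr0 addr0.
by rewrite sqnormD // sqnormZ // ipZr //; lra.
Qed.

Lemma riesz_representation_nonzero : exists g, forall x, phi x = ip x g.
Proof.
have [u uP] := minimizing_exists.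
have [l ul] := ip_complete hH (minimizing_cauchy uP).
have [hl l_min] := minimizing_limit uP ul.
have ll_neq0 : ip l l != 0.
  by apply/eqP => /(ip_definite hH) l0; move: hl; rewrite l0 phi0 => /eqP; rewrite eq_sym oner_eq0.
exists (conjc (ip l l)^-1 *: l) => x.
have /minimizer_orthogonal : phi (x - phi x *: l) = 0 by rewrite phiB phiZ hl mulr1 subrr.
move=> /(_ l hl l_min); rewrite ipBl // ipZl // => /subr0_eq xlE.
by rewrite ipZr // conjcK xlE mulrCA mulVf // mulr1.
Qed.

End RieszRepresentation.

Section SquareIntegrals.
Variables (R : realType) (d : measure_display) (T : measurableType d).
Variable mu : {measure set T -> \bar R}.

Lemma sqmod_integrable (h : T -> R[i]) : cmeasurable h ->
  (\int[mu]_(w in setT) (sqmod (h w))%:E < +oo)%E ->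
  mu.-integrable setT (fun w => (sqmod (h w))%:E).
Proof.
move=> [mRe mIm] h_fin; apply/integrableP; split.
  by apply/measurable_EFinP; apply: measurable_funD; apply: measurable_funX.
by under eq_integral => w _ do rewrite /= ger0_norm ?sqmod_ge0 //.
Qed.

Lemma integral_sqmod_pythagoras (c a : T -> R[i]) :
  mu.-integrable setT (fun w => (sqmod (c w))%:E) ->
  mu.-integrable setT (fun w => (sqmod (a w))%:E) ->
  mu.-integrable setT (fun w => (complex.Re (c w * conjc (a w)))%:E) ->
  (\int[mu]_(w in setT) (complex.Re (c w * conjc (a w)))%:E =
   \int[mu]_(w in setT) (sqmod (a w))%:E)%E ->
  (\int[mu]_(w in setT) (sqmod (c w))%:E =
   \int[mu]_(w in setT) (sqmod (c w - a w))%:E +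
   \int[mu]_(w in setT) (sqmod (a w))%:E)%E.
Proof.
move=> ic ia ica caE.
have i2ca := integrableZl measurableT 2 ica.
rewrite [X in _ = X + _](eq_integral (fun w => (sqmod (c w))%:E + (sqmod (a w))%:E -
                               2%:E * (complex.Re (c w * conjc (a w)))%:E)%E); last first.
  by move=> w _; rewrite sqmodB EFinB EFinD EFinM.
rewrite integralB ?integrableD // integralD // integralZl // caE.
rewrite -(fineK (integrable_fin_num measurableT ic)).
rewrite -(fineK (integrable_fin_num measurableT ia)).
by rewrite -EFinM -EFinN -!EFinD; congr EFin; ring.
Qed.

End SquareIntegrals.

Section Adjoints.
Variable R : realType.
Variable H : lmodType R[i].
Variable ip : H -> H -> R[i].
Hypothesis hH : hilbert_space ip.
Local Notation sqnorm x := (complex.Re (ip x x)).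

Lemma riesz_representation (phi : H -> R[i]) :
  (forall a x y, phi (a *: x + y) = a * phi x + phi y) ->
  (exists M, forall x, sqmod (phi x) <= M * sqnorm x) ->
  exists g, forall x, phi x = ip x g.
Proof.
move=> phi_lin [M phiM]; have [phi_neq0|] := pselect (exists x, phi x != 0).
  by apply: (riesz_representation_nonzero hH phi_lin phiM).
move=> /forallNP phi0; exists 0 => x; rewrite ip0r //.
by apply/eqP/negPn/negP/phi0.
Qed.

Lemma bounded_op_sqnorm (A : H -> H) : bounded_op ip A ->
  exists M, forall x, sqnorm (A x) <= M * sqnorm x.
Proof.
case=> _ [M AM]; exists (M ^+ 2) => x; have := AM x; rewrite /hnorm => Ax_le.
rewrite -(sqr_sqrtr (sqnorm_ge0 hH (A x))) -(sqr_sqrtr (sqnorm_ge0 hH x)) -exprMn.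
by rewrite lerXn2r ?nnegrE ?sqrtr_ge0 // (le_trans (sqrtr_ge0 _) Ax_le).
Qed.

Lemma bounded_op_adjoint (A : H -> H) : bounded_op ip A -> exists As, adjoint_of ip A As.
Proof.
move=> hA; have [M AM] := bounded_op_sqnorm hA.
suff /choice[As AsP] : forall y, exists z, forall x, ip (A x) y = ip x z by exists As.
move=> y; apply: riesz_representation => [a x z|].
  by rewrite hA.1 ipDl // ipZl.
exists (M * sqnorm y) => x; apply: le_trans (cauchy_schwarz hH _ _) _.
by rewrite mulrAC ler_wpM2r ?sqnorm_ge0.
Qed.

Lemma adjoint_comp_self_adjoint (A As B Bs : H -> H) :
  adjoint_of ip A As -> adjoint_of ip B Bs -> self_adjoint ip (B \o A) ->
  forall y, As (Bs y) = B (A y).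
Proof. by move=> hA hB hBA y; apply: (ipr_inj hH) => x; rewrite -hA -hB hBA. Qed.

End Adjoints.

Theorem theorem3p9 (R : realType) (H : lmodType R[i]) (ip : H -> H -> R[i])
  (hH : hilbert_space ip) (hsep : separable ip)
  (d : measure_display) (T : measurableType d) (mu : {measure set T -> \bar R})
  (K Ks Kd : H -> H)
  (hK : bounded_op ip K) (hKcl : closed_range ip K)
  (hKs : adjoint_of ip K Ks) (hKd : mp_pinv ip K Kd)
  (F : T -> H) (hF : parseval_cont_Kframe mu ip Ks F)
  (f : H) (c : T -> R[i]) (hc : L2fun mu c)
  (hcf : weak_integral mu ip c F (K f)) :
  (\int[mu]_(w in setT) (sqmod (c w))%:E =
   \int[mu]_(w in setT) (sqmod (c w - ip f (Kd (F w))))%:E +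
   \int[mu]_(w in setT) (sqmod (ip f (Kd (F w))))%:E)%E.
Proof.
case: hKd => Kd_bounded _ KdKKd _ KdK_sa.
have [Kds hKds] := bounded_op_adjoint hH Kd_bounded.
set g := Kds f.
have aE w : ip f (Kd (F w)) = ip g (F w) by rewrite (ip_conj_sym hH) hKds -(ip_conj_sym hH).
have [[Re_int _] cE] := hcf g.
under [X in _ = X + _]eq_integral => w _ do rewrite aE.
under [X in _ = _ + X]eq_integral => w _ do rewrite aE.
apply: integral_sqmod_pythagoras.
- exact: sqmod_integrable hc.1 hc.2.
- by apply: sqmod_integrable (hF.1 g) _; rewrite hF.2 ltry.
- by under eq_fun do rewrite -(ip_conj_sym hH).
- under eq_integral => w _ do rewrite -(ip_conj_sym hH).
  rewrite hF.2 /hnorm sqr_sqrtr ?sqnorm_ge0 //.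
  (* Ks g = Kd (K f) and Kd K is an orthogonal projection *)
  rewrite (adjoint_comp_self_adjoint hH hKs hKds KdK_sa) -KdK_sa KdKKd hKds.
  by rewrite -(fineK (integrable_fin_num measurableT Re_int)) cE.
Qed.
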